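(* Let $K\ge1$, $\delta\in(0,1)$, parameters $\theta_i\in\Theta_i$ for $i\in[K]$, and data $\mathbf X=(X_1,\dots,X_K)$ with arbitrary dependence. For each $i$ let $(E_i(\theta))_{\theta\in\Theta_i}$ be a family of e-values ($E_i(\theta)\ge0$, $\mathbb{E}[E_i(\theta)]\le1$ whenever $\theta$ is the true value of $\theta_i$) with associated e-CIs $C_i(\alpha)=\{\theta\in\Theta_i:E_i(\theta)<1/\alpha\}$. Let $w_1,\dots,w_K\ge0$ be fixed weights with $\sum_{i=1}^K w_i\le K$, let $S=\mathcal S(\mathbf X)$ for an arbitrary selection rule $\mathcal S$, and for each $i\in S$ report $C_i(w_i\delta|S|/K)$. Then $$\mathrm{FCR}=\mathbb{E}\left[\frac{\sum_{i\in S}\mathbf 1\{\theta_i\notin C_i(w_i\delta|S|/K)\}}{|S|\vee1}\right]\le\delta.$$ *)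

From HB Require Import structures.
From mathcomp Require Import all_boot all_order all_algebra.
From mathcomp Require Import all_classical all_reals all_analysis.
Set Implicit Arguments. Unset Strict Implicit. Unset Printing Implicit Defensive.
Import Order.TTheory GRing.Theory Num.Theory.
Local Open Scope classical_set_scope.
Local Open Scope ring_scope.

(* e-confidence interval C(alpha) = {theta | E(theta) < 1/alpha}, with the
   convention 1/0 = +oo, i.e. C(0) is the whole parameter space. *)
Definition e_CI (R : realType) (Theta : Type) (Eth : Theta -> R) (alpha : R)
  : set Theta := [set th | alpha = 0 \/ Eth th < alpha^-1].

Definition miscover (R : realType) (T : Type) (K : nat) (Theta : 'I_K -> Type)
  (theta : forall i, Theta i) (E : forall i, Theta i -> T -> R)
  (w : 'I_K -> R) (delta : R) (S : T -> {set 'I_K}) (omega : T) (i : 'I_K) : R :=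
  \1_(~` e_CI (fun th => E i th omega)
          (w i * delta * (#|S omega|)%:R / K%:R)) (theta i).

Definition FCR (R : realType) (d : measure_display) (T : measurableType d)
  (P : probability T R) (K : nat) (Theta : 'I_K -> Type)
  (theta : forall i, Theta i) (E : forall i, Theta i -> T -> R)
  (w : 'I_K -> R) (delta : R) (S : T -> {set 'I_K}) : \bar R :=
  (\int[P]_omega
     ((\sum_(i in S omega) miscover theta E w delta S omega i)
        / (maxn #|S omega| 1)%:R)%:E)%E.

From HB Require Import structures.
From mathcomp Require Import all_boot all_order all_algebra.
From mathcomp Require Import all_classical all_reals all_analysis.
From mathcomp Require Import ring.
Import Order.TTheory GRing.Theory Num.Theory measurable_realfun.
Local Open Scope classical_set_scope.
Local Open Scope ring_scope.

(* Markov's inequality in pointwise form: [theta_i] escapes [C_i(a)] only when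
   [E_i(theta_i) >= 1/a], so the miscoverage indicator is at most
   [a * E_i(theta_i)] with [a = w_i delta |S| / K].  Summing over [i \in S] and
   dividing by [|S|] cancels the data-dependent factor [|S|], which bounds the
   FCR integrand by [sum_i (delta w_i / K) E_i(theta_i)] whatever the
   selection.  Taking expectations gives at most [delta * sum_i w_i / K <= delta].
   The dominating function is measurable, so the selection rule need not be. *)

Lemma e_CI_miss_le (R : realType) (Theta : Type) (f : Theta -> R) (a : R)
  (th : Theta) :
  0 <= a -> 0 <= f th -> \1_(~` e_CI f a) th <= a * f th.
Proof.
move=> a0 f0; rewrite indicE.
case: (boolP (th \in _)) => [|_]; last by rewrite mulr_ge0.
rewrite inE /e_CI /= => /not_orP[/eqP an0 /negP]; rewrite -leNgt => le_inv_f.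
by rewrite -(mulfV an0) ler_wpM2l.
Qed.

Section ge0_integral_le.
Context {d : measure_display} {T : measurableType d} {R : realType}.
Variable mu : {measure set T -> \bar R}.

Lemma ge0_le_integralT (f g : T -> \bar R) :
  (forall x, (0 <= f x)%E) -> (forall x, (f x <= g x)%E) ->
  (\int[mu]_x f x <= \int[mu]_x g x)%E.
Proof.
move=> f0 fg; have g0 x : (0 <= g x)%E by apply: le_trans (f0 x) (fg x).
rewrite !ge0_integralTE //; apply: ereal_sup_le => _ [h hf <-].
by exists h => // x; apply: le_trans (hf x) (fg x).
Qed.

Lemma ge0_integral_weighted_sum_le (I : finType) (c : I -> R) (f : I -> T -> R) :
  (forall i, 0 <= c i) -> (forall i x, 0 <= f i x) ->
  (forall i, measurable_fun setT (f i)) ->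
  (forall i, (\int[mu]_x (f i x)%:E <= 1)%E) ->
  (\int[mu]_x (\sum_i c i * f i x)%:E <= (\sum_i c i)%:E)%E.
Proof.
move=> c0 f0 mf int_f_le1.
under eq_integral do rewrite -sumEFin.
rewrite ge0_integral_sum // => [|i|i x _]; last 2 first.
- by apply/measurable_EFinP; apply: measurable_funM.
- by rewrite lee_fin mulr_ge0.
rewrite -sumEFin; apply: lee_sum => i _.
under eq_integral do rewrite EFinM.
rewrite ge0_integralZl_EFin //; last 2 first.
- by move=> x _; rewrite lee_fin.
- exact/measurable_EFinP.
by rewrite -[leRHS]mule1 lee_wpmul2l ?lee_fin.
Qed.

End ge0_integral_le.

Section fcr_integrand.
Variables (R : realType) (T : Type) (K : nat) (Theta : 'I_K -> Type).
Variables (theta : forall i, Theta i) (E : forall i, Theta i -> T -> R).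
Variables (w : 'I_K -> R) (delta : R) (S : T -> {set 'I_K}).
Hypothesis E_ge0 : forall i (th : Theta i) (omega : T), 0 <= E i th omega.
Hypothesis w_ge0 : forall i, 0 <= w i.
Hypothesis delta_ge0 : 0 <= delta.

Let c (i : 'I_K) : R := delta * w i / K%:R.

Lemma miscover_le omega i :
  miscover theta E w delta S omega i <= #|S omega|%:R * c i * E i (theta i) omega.
Proof.
have -> : #|S omega|%:R * c i = w i * delta * #|S omega|%:R / K%:R.
  by rewrite /c; ring.
by apply: e_CI_miss_le; rewrite // divr_ge0 ?mulr_ge0.
Qed.

Lemma fcr_integrand_le omega :
  (\sum_(i in S omega) miscover theta E w delta S omega i)
    / (maxn #|S omega| 1)%:R <= \sum_i c i * E i (theta i) omega.
Proof.
have cE_ge0 i : 0 <= c i * E i (theta i) omega.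
  by rewrite /c !mulr_ge0 ?invr_ge0.
have [/eqP|S_gt0] := posnP #|S omega|.
  rewrite cards_eq0 => /eqP ->; rewrite big_set0 mul0r.
  exact: sumr_ge0.
rewrite (maxn_idPl S_gt0) ler_pdivrMr ?ltr0n //.
apply: le_trans (ler_sum _ (fun i _ => miscover_le omega i)) _.
under eq_bigr do rewrite -mulrA.
rewrite -mulr_sumr [leRHS]mulrC ler_wpM2l // [leLHS]big_mkcond /=.
by apply: ler_sum => i _; case: ifP.
Qed.

End fcr_integrand.

Theorem theorem5 (R : realType) (d : measure_display) (T : measurableType d)
  (P : probability T R) (K : nat) (hK : (1 <= K)%N)
  (delta : R) (hdelta : 0 < delta < 1)
  (Theta : 'I_K -> Type) (theta : forall i, Theta i)
  (E : forall i, Theta i -> T -> R)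
  (hEmeas : forall i (th : Theta i), measurable_fun setT (E i th))
  (hEnn : forall i (th : Theta i) (omega : T), 0 <= E i th omega)
  (hEexp : forall i, (\int[P]_omega (E i (theta i) omega)%:E <= 1)%E)
  (w : 'I_K -> R) (hw : forall i, 0 <= w i)
  (hwsum : \sum_(i < K) w i <= K%:R)
  (S : T -> {set 'I_K})
  (hSmeas : forall A : {set 'I_K}, measurable [set omega | S omega = A]) :
  (FCR P theta E w delta S <= delta%:E)%E.
Proof.
case/andP: hdelta => /ltW delta_ge0 _.
have c_ge0 i : 0 <= delta * w i / K%:R by rewrite divr_ge0 ?mulr_ge0.
apply: (@le_trans _ _
  (\int[P]_omega (\sum_i delta * w i / K%:R * E i (theta i) omega)%:E)%E).
  apply: ge0_le_integralT => omega; rewrite lee_fin.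
    by rewrite divr_ge0 ?sumr_ge0 // => i _; rewrite /miscover indicE ler0n.
  exact: fcr_integrand_le.
apply: le_trans (ge0_integral_weighted_sum_le P _ _ _ c_ge0
  (fun i => hEnn i (theta i)) (fun i => hEmeas i (theta i)) hEexp) _.
by rewrite lee_fin -mulr_suml -mulr_sumr ler_pdivrMr ?ltr0n // ler_wpM2l.
Qed.
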